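(* Let $a,b$ be coprime positive integers with $ab\ne1$, let $X>0$ and let $u\ne1$ be positive. Then $$\operatorname{vol}(\mathcal{R}'(X))=\operatorname{vol}(\mathcal{R}(X))=\frac{X\operatorname{vol}(\mathcal{S}_{b/a})}{\sqrt{|a^2-b^2|}}.$$ Furthermore $$\mathcal{R}(X)\subseteq[-c\sqrt{X},c\sqrt{X}]\times\big(0,c\sqrt{X/|a^2-b^2|}\big],\qquad \mathcal{S}_u\subseteq[-c,c]\times(0,c],$$ for an absolute constant $c>0$.
   Context: For positive $u\ne1$ define the quadratic forms $p_u(s,t)=-2s^2-\frac{1-u^2}{|1-u^2|}t^2+\frac{4}{\sqrt{|1-u^2|}}st$, $q_u(s,t)=2s^2-\frac{1-u^2}{|1-u^2|}t^2$, $r_u(s,t)=2s^2-2\frac{1-u^2}{\sqrt{|1-u^2|}}st+\frac{1-u^2}{|1-u^2|}t^2$, and $\mathcal{S}_u=\{(s,t)\in\mathbb{R}\times\mathbb{R}_{>0}: 0<p_u(s,t)\le1,\ 0<q_u(s,t)\le1,\ r_u(s,t)>0\}$. With $Q_1(s,t)=2s^2+(a^2-b^2)t^2-4ast$, $Q_2(s,t)=-2s^2+(a^2-b^2)t^2$, $Q_3(s,t)=-2as^2+2(a^2-b^2)st-a(a^2-b^2)t^2$, define $\mathcal{R}(X)=\{(s,t)\in\mathbb{R}\times\mathbb{R}_{>0}: Q_3(s,t)<0,\ 0>Q_1(s,t)\ge -X,\ 0>Q_2(s,t)\ge -X\}$ and $\mathcal{R}'(X)=\{(s,t)\in\mathcal{R}(X):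 s(s-at)\ne0,\ s/t\ne(a^2-b^2)/(2a)\}$. *)

From HB Require Import structures.
From mathcomp Require Import all_boot all_order all_algebra.
From mathcomp Require Import all_classical all_reals all_analysis.
Set Implicit Arguments. Unset Strict Implicit. Unset Printing Implicit Defensive.
Import Order.TTheory GRing.Theory Num.Theory.
Local Open Scope classical_set_scope.
Local Open Scope ring_scope.

Definition vol2 {R : realType} (A : set (R * R)) : \bar R :=
  ((@lebesgue_measure R) \x (@lebesgue_measure R))%E A.

Section forms.
Variable R : realType.

Definition sgu (u : R) : R := (1 - u ^+ 2) / `|1 - u ^+ 2|.

Definition p_u (u s t : R) : R :=
  - 2 * s ^+ 2 - sgu u * t ^+ 2 + 4 / Num.sqrt `|1 - u ^+ 2| * s * t.
Definition q_u (u s t : R) : R := 2 * s ^+ 2 - sgu u * t ^+ 2.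
Definition r_u (u s t : R) : R :=
  2 * s ^+ 2 - 2 * ((1 - u ^+ 2) / Num.sqrt `|1 - u ^+ 2|) * s * t
  + sgu u * t ^+ 2.

Definition S_u (u : R) : set (R * R) :=
  [set st | 0 < st.2 /\ (0 < p_u u st.1 st.2 <= 1) /\
            (0 < q_u u st.1 st.2 <= 1) /\ 0 < r_u u st.1 st.2].

Definition Q1 (a b s t : R) : R := 2 * s ^+ 2 + (a ^+ 2 - b ^+ 2) * t ^+ 2 - 4 * a * s * t.
Definition Q2 (a b s t : R) : R := - 2 * s ^+ 2 + (a ^+ 2 - b ^+ 2) * t ^+ 2.
Definition Q3 (a b s t : R) : R :=
  - 2 * a * s ^+ 2 + 2 * (a ^+ 2 - b ^+ 2) * s * t - a * (a ^+ 2 - b ^+ 2) * t ^+ 2.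

Definition Rset (a b X : R) : set (R * R) :=
  [set st | 0 < st.2 /\ Q3 a b st.1 st.2 < 0 /\
            (- X <= Q1 a b st.1 st.2 < 0) /\ (- X <= Q2 a b st.1 st.2 < 0)].

Definition Rset' (a b X : R) : set (R * R) :=
  [set st | Rset a b X st /\ st.1 * (st.1 - a * st.2) != 0 /\
            st.1 / st.2 != (a ^+ 2 - b ^+ 2) / (2 * a)].
End forms.

From HB Require Import structures.
From mathcomp Require Import all_boot all_order all_algebra.
From mathcomp Require Import all_classical all_reals all_analysis.
From mathcomp Require Import ring lra measurable_realfun.
Import Order.TTheory GRing.Theory Num.Theory.
Local Open Scope classical_set_scope.
Local Open Scope ring_scope.

(* The substitution (s, t) |-> (s / sqrt X, t sqrt|a^2 - b^2| / sqrt X) turns p_u, q_u, r_u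
   for u = b/a into -Q1/X, -Q2/X and -Q3/(a X), hence maps R(X) onto S_{b/a}.  It rescales
   each coordinate separately, so integrating the lengths of vertical sections yields the
   factor X / sqrt|a^2 - b^2|; R'(X) differs from R(X) by at most two points per vertical
   section.  The bounds on S_u follow from p_u, q_u <= 1 and are carried over to R(X) by the
   same substitution. *)

Section rescaling.
Variable R : realType.
Implicit Types A B s t u al c q : R.

Lemma one_sub_sqr_div A B : A != 0 -> 1 - (B / A) ^+ 2 = (A ^+ 2 - B ^+ 2) / A ^+ 2.
Proof. by move=> A0; field. Qed.

Lemma sqr_div_neq1 A B : A != 0 -> (B / A) ^+ 2 != 1 = (A ^+ 2 != B ^+ 2).
Proof.
move=> A0; rewrite eq_sym -subr_eq0 one_sub_sqr_div // mulf_eq0 invr_eq0.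
by rewrite sqrf_eq0 (negbTE A0) orbF subr_eq0.
Qed.

Lemma sgu_div A B : A != 0 -> sgu (B / A) = (A ^+ 2 - B ^+ 2) / `|A ^+ 2 - B ^+ 2|.
Proof.
move=> A0; rewrite /sgu one_sub_sqr_div // normrM normfV (ger0_norm (sqr_ge0 A)).
by rewrite invf_div mulrA divfK ?sqrf_eq0.
Qed.

Lemma sqrt_norm_one_sub_sqr_div A B : 0 < A ->
  Num.sqrt `|1 - (B / A) ^+ 2| = Num.sqrt `|A ^+ 2 - B ^+ 2| / A.
Proof.
move=> A0; rewrite one_sub_sqr_div ?gt_eqF // normrM normfV (ger0_norm (sqr_ge0 A)).
by rewrite sqrtrM // sqrtrV ?sqr_ge0 // sqrtr_sqr (gtr0_norm A0).
Qed.

Lemma oppr_div_gt0 q c : 0 < c -> (0 < - q / c) = (q < 0).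
Proof. by move=> c0; rewrite pmulr_lgt0 ?invr_gt0 // oppr_gt0. Qed.

Lemma oppr_div_itv01 q c : 0 < c -> (0 < - q / c <= 1) = (- c <= q < 0).
Proof. by move=> c0; rewrite oppr_div_gt0 // ler_pdivrMr // mul1r lerNl andbC. Qed.

Section Rset_rescaling.
Variables A B : R.
Hypotheses (A_gt0 : 0 < A) (AB_neq : A ^+ 2 != B ^+ 2).
Let sD := Num.sqrt `|A ^+ 2 - B ^+ 2|.

Let sD_gt0 : 0 < sD.
Proof. by rewrite sqrtr_gt0 normr_gt0 subr_eq0. Qed.

Let sgu_divE : sgu (B / A) = (A ^+ 2 - B ^+ 2) / sD ^+ 2.
Proof. by rewrite sqr_sqrtr // sgu_div ?gt_eqF. Qed.

Let sqrt_normE : Num.sqrt `|1 - (B / A) ^+ 2| = sD / A.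
Proof. exact: sqrt_norm_one_sub_sqr_div. Qed.

Lemma p_u_rescale s t al : al != 0 ->
  p_u (B / A) (s / al) (t * sD / al) = - Q1 A B s t / al ^+ 2.
Proof. by move=> al0; rewrite /p_u /Q1 sgu_divE sqrt_normE; field; rewrite al0 !gt_eqF. Qed.

Lemma q_u_rescale s t al : al != 0 ->
  q_u (B / A) (s / al) (t * sD / al) = - Q2 A B s t / al ^+ 2.
Proof. by move=> al0; rewrite /q_u /Q2 sgu_divE; field; rewrite al0 gt_eqF. Qed.

Lemma r_u_rescale s t al : al != 0 ->
  r_u (B / A) (s / al) (t * sD / al) = - Q3 A B s t / (A * al ^+ 2).
Proof.
move=> al0; rewrite /r_u /Q3 sgu_divE sqrt_normE one_sub_sqr_div ?gt_eqF //.
by field; rewrite al0 !gt_eqF.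
Qed.

Lemma Rset_rescale al s t : 0 < al ->
  Rset A B (al ^+ 2) (s, t) <-> S_u (B / A) (s / al, t * sD / al).
Proof.
move=> al_gt0; rewrite /Rset /S_u /= p_u_rescale ?q_u_rescale ?r_u_rescale ?gt_eqF //.
have al2_gt0 : 0 < al ^+ 2 by rewrite exprn_gt0.
rewrite !oppr_div_itv01 // (oppr_div_gt0 _ _ (mulr_gt0 A_gt0 al2_gt0)).
by rewrite !pmulr_lgt0 ?invr_gt0; tauto.
Qed.

End Rset_rescaling.

Lemma S_u_bounded_lt1 u s t : 0 < 1 - u ^+ 2 -> S_u u (s, t) ->
  -2 <= s <= 2 /\ 0 < t <= 2.
Proof.
move=> u_lt1; rewrite /S_u /p_u /q_u /= /sgu (gtr0_norm u_lt1) divff ?gt_eqF // !mul1r.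
move=> [t_gt0 [/andP [p_gt0 p_le1] [/andP [q_gt0 q_le1] _]]].
set w := Num.sqrt (1 - u ^+ 2) in p_gt0 p_le1.
have w_gt0 : 0 < w by rewrite sqrtr_gt0.
have w_le1 : w <= 1.
  have : w ^+ 2 <= 1 by rewrite sqr_sqrtr ?(ltW u_lt1) //; move: (sqr_ge0 u); lra.
  nra.
set K := 4 / w in p_gt0 p_le1.
have K_ge4 : 4 <= K by rewrite ler_pdivlMr //; nra.
have st_gt0 : 0 < s * t by nra.
have s_gt0 : 0 < s by nra.
have st_le : 2 * s * t <= 1 + t ^+ 2 by nra.
have sqr_st_le : 4 * s ^+ 2 * t ^+ 2 <= (1 + t ^+ 2) ^+ 2.
  have : (2 * s * t) ^+ 2 <= (1 + t ^+ 2) ^+ 2 by rewrite ler_sqr ?nnegrE; nra.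
  nra.
have t_le2 : t <= 2 by nra.
by split; apply/andP; split; nra.
Qed.

Lemma S_u_bounded_gt1 u s t : 1 - u ^+ 2 < 0 -> S_u u (s, t) ->
  -1 <= s <= 1 /\ 0 < t <= 1.
Proof.
move=> u_gt1; rewrite /S_u /q_u /= /sgu (ltr0_norm u_gt1) divrN divff ?lt_eqF //.
move=> [t_gt0 [_ [/andP [q_gt0 q_le1] _]]].
by split; apply/andP; split; nra.
Qed.

Lemma S_u_bounded u : u ^+ 2 != 1 ->
  S_u u `<=` [set st | -2 <= st.1 <= 2 /\ 0 < st.2 <= 2].
Proof.
move=> u2_neq1 [s t]; have [u_lt1|u_gt1|] := ltrgtP 0 (1 - u ^+ 2).
- exact: S_u_bounded_lt1.
- move=> /(S_u_bounded_gt1 _ _ _ u_gt1) [/andP [s_ge s_le] /andP [t_gt0 t_le]].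
  by rewrite /=; split; apply/andP; split; lra.
- by move=> /eqP; rewrite eq_sym subr_eq0 eq_sym (negbTE u2_neq1).
Qed.

Lemma Rset_bounded A B X : 0 < A -> A ^+ 2 != B ^+ 2 -> 0 < X ->
  Rset A B X `<=` [set st | - 2 * Num.sqrt X <= st.1 <= 2 * Num.sqrt X /\
                            0 < st.2 <= 2 * Num.sqrt (X / `|A ^+ 2 - B ^+ 2|)].
Proof.
move=> A_gt0 AB_neq X_gt0 [s t].
set al := Num.sqrt X; set sD := Num.sqrt `|A ^+ 2 - B ^+ 2|.
have al_gt0 : 0 < al by rewrite sqrtr_gt0.
have sD_gt0 : 0 < sD by rewrite sqrtr_gt0 normr_gt0 subr_eq0.
have X_eq : X = al ^+ 2 by rewrite sqr_sqrtr ?ltW.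
have -> : Num.sqrt (X / `|A ^+ 2 - B ^+ 2|) = al / sD by rewrite sqrtrM ?sqrtrV // ltW.
have u2_neq1 : (B / A) ^+ 2 != 1 by rewrite sqr_div_neq1 // gt_eqF.
rewrite {1}X_eq => /(Rset_rescale _ _ A_gt0 AB_neq _ _ _ al_gt0) /(S_u_bounded _ u2_neq1) /=.
set z := s / al; set w := t * sD / al => -[/andP [z_ge z_le] /andP [w_gt0 w_le]].
have -> : s = z * al by rewrite divfK ?gt_eqF.
have -> : t = w * (al / sD) by rewrite /w; field; rewrite !gt_eqF.
have alsD_gt0 : 0 < al / sD by rewrite divr_gt0.
by rewrite /=; split; apply/andP; split; nra.
Qed.

End rescaling.

Lemma content_setD_null d (T : ringOfSetsType d) (R : realFieldType)
    (mu : {content set T -> \bar R}) (A N : set T) :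
  measurable A -> measurable N -> mu N = 0%E -> mu (A `\` N) = mu A.
Proof.
move=> mA mN N0; rewrite [RHS](measureDI mu mA mN).
by rewrite (subset_measure0 _ mN (@subIsetr _ A N) N0) ?adde0 //; exact: measurableI.
Qed.

Section lebesgue_dilation.
Variable R : realType.
Local Notation mR := (measurableTypeR R).

Lemma measurable_fun_divr (k : R) :
  measurable_fun [set: mR] ((fun x : R => x / k) : mR -> mR).
Proof. exact: continuous_measurable_fun (@mulrr_continuous R k^-1). Qed.

Lemma lebesgue_measure_preimage_divr (k : R) (A : set mR) : 0 < k -> measurable A ->
  lebesgue_measure ((fun x : R => x / k) @^-1` A) = (k%:E * lebesgue_measure A)%E.
Proof.
move=> k_gt0 mA.
pose mu := measure_function_pushforward__canonical__measure_function_Measure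
  (@lebesgue_measure R) (measurable_fun_divr k).
have kV_ge0 : 0 <= k^-1 by rewrite invr_ge0 ltW.
(* Both sides are measures agreeing on half-open intervals. *)
have mu_itv (X : set R) : ocitv X -> lebesgue_measure X = mscale (NngNum kV_ge0) mu X.
  move=> [[a b] _ <-] /=; rewrite /mscale /=.
  have -> : mu `]a, b]%classic = lebesgue_measure `](a * k), (b * k)]%classic.
    change (lebesgue_measure ((fun x : R => x / k) @^-1` `]a, b]%classic)
      = lebesgue_measure `](a * k), (b * k)]%classic).
    by congr lebesgue_measure; apply/seteqP; split => x /=;
      rewrite !in_itv /= ltr_pdivlMr // ler_pdivrMr.
  rewrite !lebesgue_measure_itv /= !lte_fin ltr_pM2r //.
  case: ifP => _; last by rewrite mule0.
  by rewrite -!EFinB -EFinM; congr EFin; field; rewrite gt_eqF.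
rewrite (@lebesgue_measure_unique R (mscale (NngNum kV_ge0) mu) mu_itv A mA) /mscale /=.
by rewrite muleA -EFinM divff ?gt_eqF // mul1e.
Qed.

Lemma ge0_integral_divr (k : R) (h : mR -> \bar R) : 0 < k ->
  measurable_fun [set: mR] h -> (forall x, (0 <= h x)%E) ->
  (\int[lebesgue_measure]_x h (x / k)%R = k%:E * \int[lebesgue_measure]_x h x)%E.
Proof.
move=> k_gt0 mh h_ge0.
have := ge0_integral_pushforward (measurable_fun_divr k) lebesgue_measure
  measurableT mh (fun y _ => h_ge0 y).
rewrite preimage_setT => <-.
have k_ge0 : 0 <= k by rewrite ltW.
rewrite (eq_measure_integral (mscale (NngNum k_ge0) lebesgue_measure)); last first.
- by move=> ? A mA _; exact: lebesgue_measure_preimage_divr.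
- exact: measurable_fun_divr.
by rewrite ge0_integral_mscale.
Qed.

End lebesgue_dilation.

Section planar_sets.
Variable R : realType.
Local Notation T := (measurableTypeR R * measurableTypeR R)%type.

Lemma vol2E (A : set T) :
  vol2 A = (\int[lebesgue_measure]_x lebesgue_measure (xsection A x))%E.
Proof. by []. Qed.

Lemma measurable_fun_quadratic (f : R -> R -> R) (c1 c2 c3 : R) :
  f =2 (fun s t => c1 * s ^+ 2 + c2 * t ^+ 2 + c3 * s * t) ->
  measurable_fun [set: T] (fun st : T => f st.1 st.2).
Proof.
move=> fE; rewrite (_ : (fun st : T => _) =
    fun st => c1 * st.1 ^+ 2 + c2 * st.2 ^+ 2 + c3 * st.1 * st.2); last first.
  by apply/funext => st; rewrite fE.
have m1 : measurable_fun [set: T] (fun st : T => st.1 : R) by exact: measurable_fst.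
have m2 : measurable_fun [set: T] (fun st : T => st.2 : R) by exact: measurable_snd.
apply: measurable_funD; first apply: measurable_funD.
- by apply: measurable_funM; [exact: measurable_cst|exact: measurable_funX].
- by apply: measurable_funM; [exact: measurable_cst|exact: measurable_funX].
- by apply: measurable_funM => //; apply: measurable_funM => //; exact: measurable_cst.
Qed.

Lemma measurable_S_u (u : R) : measurable (S_u u : set T).
Proof.
have mp : measurable_fun [set: T] (fun st : T => p_u u st.1 st.2).
  by apply: (@measurable_fun_quadratic _ (-2) (- sgu u) (4 / Num.sqrt `|1 - u ^+ 2|))
    => s t; rewrite /p_u; ring.
have mq : measurable_fun [set: T] (fun st : T => q_u u st.1 st.2).
  by apply: (@measurable_fun_quadratic _ 2 (- sgu u) 0) => s t; rewrite /q_u; ring.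
have mr : measurable_fun [set: T] (fun st : T => r_u u st.1 st.2).
  by apply: (@measurable_fun_quadratic _ 2 (sgu u)
    (- 2 * ((1 - u ^+ 2) / Num.sqrt `|1 - u ^+ 2|))) => s t; rewrite /r_u; ring.
have m2 : measurable_fun [set: T] (fun st : T => st.2 : R) by exact: measurable_snd.
pose inS (st : T) := [&& 0 < st.2, 0 < p_u u st.1 st.2 <= 1,
                         0 < q_u u st.1 st.2 <= 1 & 0 < r_u u st.1 st.2].
have -> : (S_u u : set T) = setT `&` inS @^-1` [set true].
  by rewrite setTI; apply/seteqP; split => st /=;
    [case=> ? [? [? ?]]; apply/and4P | case/and4P].
have m01 (f : T -> R) : measurable_fun [set: T] f ->
    measurable_fun [set: T] (fun st => 0 < f st <= 1).
  by move=> mf; apply: measurable_and; [apply: measurable_fun_ltr|apply: measurable_fun_ler].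
apply: measurable_and => //; first exact: measurable_fun_ltr.
apply: measurable_and; first exact: m01.
apply: measurable_and; first exact: m01.
exact: measurable_fun_ltr.
Qed.

Lemma xsection_Rset_0 (A B X : R) : 0 < A -> xsection (Rset A B X : set T) 0 = set0.
Proof.
move=> A_gt0; apply/seteqP; split => // y; rewrite /xsection /= inE.
move=> [_ [Q3_lt0 [_ /andP [_ Q2_lt0]]]].
have Q3E : Q3 A B 0 y = - A * Q2 A B 0 y by rewrite /Q2 /Q3; ring.
by move: Q3_lt0; rewrite Q3E; nra.
Qed.

Section Rset_volume.
Variables A B X : R.
Hypotheses (A_gt0 : 0 < A) (AB_neq : A ^+ 2 != B ^+ 2) (X_gt0 : 0 < X).
Let al := Num.sqrt X.
Let sD := Num.sqrt `|A ^+ 2 - B ^+ 2|.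

Let al_gt0 : 0 < al. Proof. by rewrite sqrtr_gt0. Qed.
Let sD_gt0 : 0 < sD. Proof. by rewrite sqrtr_gt0 normr_gt0 subr_eq0. Qed.
Let sqr_al : al ^+ 2 = X. Proof. by rewrite sqr_sqrtr ?ltW. Qed.

Lemma xsection_Rset x : xsection (Rset A B X : set T) x =
  (fun y => y / (al / sD)) @^-1` xsection (S_u (B / A)) (x / al).
Proof.
apply/seteqP; split => y; rewrite /xsection /= !inE -sqr_al Rset_rescale //;
  by rewrite (_ : y / (al / sD) = y * sD / al) //; field; rewrite !gt_eqF.
Qed.

Lemma measurable_xsection_Rset x : measurable (xsection (Rset A B X : set T) x).
Proof.
rewrite xsection_Rset -[X in measurable X]setTI; apply: measurable_fun_divr => //.
exact: measurable_xsection (measurable_S_u _).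
Qed.

Lemma lebesgue_measure_xsection_Rset x :
  lebesgue_measure (xsection (Rset A B X : set T) x) =
  ((al / sD)%:E * lebesgue_measure (xsection (S_u (B / A) : set T) (x / al)%R))%E.
Proof.
rewrite xsection_Rset lebesgue_measure_preimage_divr ?divr_gt0 //.
exact: measurable_xsection (measurable_S_u _).
Qed.

Lemma vol2_Rset : vol2 (Rset A B X) = ((X / sD)%:E * vol2 (S_u (B / A)))%E.
Proof.
pose h x := lebesgue_measure (xsection (S_u (B / A) : set T) x).
have mh : measurable_fun setT h := measurable_fun_xsection _ (measurable_S_u _).
have h_ge0 x : (0 <= h x)%E by exact: measure_ge0.
have mh_al : measurable_fun setT (fun x : measurableTypeR R => h (x / al)).
  by apply: measurableT_comp mh _; exact: measurable_fun_divr.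
rewrite !vol2E; under eq_integral => x _ do rewrite lebesgue_measure_xsection_Rset.
rewrite ge0_integralZl_EFin //; last by rewrite divr_ge0 ?ltW.
rewrite (ge0_integral_divr _ _ h al_gt0 mh h_ge0) muleA -EFinM.
by congr (_ * _)%E; congr EFin; rewrite -sqr_al; field; rewrite !gt_eqF.
Qed.

Let K := (A ^+ 2 - B ^+ 2) / (2 * A).

Lemma xsection_Rset' x : x != 0 ->
  xsection (Rset' A B X : set T) x = xsection (Rset A B X) x `\` ([set x / A] `|` [set x / K]).
Proof.
move=> x_neq0.
have K_neq0 : K != 0.
  by rewrite /K mulf_neq0 ?subr_eq0 // invr_eq0 mulf_neq0 ?pnatr_eq0 // gt_eqF.
have yA y : (x * (x - A * y) == 0) = (y == x / A).
  rewrite mulf_eq0 (negbTE x_neq0) /= subr_eq0.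
  by apply/eqP/eqP => ->; field; rewrite gt_eqF.
have yK y : 0 < y -> (x / y == K) = (y == x / K).
  by move=> y_gt0; apply/eqP/eqP => [<-|->]; field; rewrite x_neq0 ?K_neq0 ?gt_eqF.
apply/seteqP; split => y; rewrite /xsection /= !inE.
- move=> [RSet [h1 h2]]; have y_gt0 : 0 < y := RSet.1.
  by split=> // -[] /= /eqP; [rewrite -yA (negbTE h1) | rewrite -yK // (negbTE h2)].
- move=> [RSet yN]; have y_gt0 : 0 < y := RSet.1.
  split=> //; rewrite yA yK //; split; apply/eqP => y_eq; apply: yN.
  + by left.
  + by right.
Qed.

Lemma vol2_Rset' : vol2 (Rset' A B X) = vol2 (Rset A B X).
Proof.
rewrite !vol2E; apply: eq_integral => x _.
have [->|x_neq0] := eqVneq x 0.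
  have Rset'_0 : xsection (Rset' A B X : set T) 0 = set0.
    apply/seteqP; split => y // Ry; have : xsection (Rset A B X : set T) 0 y.
      by move: Ry; rewrite /xsection /= !inE => -[].
    by rewrite xsection_Rset_0.
  by rewrite Rset'_0 xsection_Rset_0.
have N_null : lebesgue_measure ([set x / A] `|` [set x / K]) = 0%E.
  by rewrite measureU0 //; exact: lebesgue_measure_set1.
rewrite (xsection_Rset' _ x_neq0) content_setD_null //.
- exact: measurable_xsection_Rset.
- by apply: measurableU; exact: measurable_set1.
Qed.

End Rset_volume.
End planar_sets.

Lemma natr_sqr_neq (R : realType) (a b : nat) : (0 < a)%N -> coprime a b ->
  (a * b != 1)%N -> a%:R ^+ 2 != b%:R ^+ 2 :> R.
Proof.
move=> a_gt0 ab_coprime ab_neq1; rewrite -!natrX eqr_nat eqn_exp2r //.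
by apply: contra ab_neq1 => /eqP ab; move: ab_coprime; rewrite -ab /coprime gcdnn => /eqP ->.
Qed.

Theorem lemma6p2 (R : realType) :
  (forall (a b : nat) (X : R),
     (0 < a)%N -> (0 < b)%N -> coprime a b -> (a * b != 1)%N -> 0 < X ->
     vol2 (Rset' a%:R b%:R X) = vol2 (Rset a%:R b%:R X) /\
     vol2 (Rset a%:R b%:R X) =
       ((X / Num.sqrt `|a%:R ^+ 2 - b%:R ^+ 2|)%:E
        * vol2 (S_u (b%:R / a%:R)))%E)
  /\
  (exists c : R, 0 < c /\
     (forall (a b : nat) (X : R),
        (0 < a)%N -> (0 < b)%N -> coprime a b -> (a * b != 1)%N -> 0 < X ->
        Rset a%:R b%:R X `<=`
          [set st | - c * Num.sqrt X <= st.1 <= c * Num.sqrt X /\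
                    0 < st.2 <= c * Num.sqrt (X / `|a%:R ^+ 2 - b%:R ^+ 2|)]) /\
     (forall u : R, 0 < u -> u != 1 ->
        S_u u `<=` [set st | - c <= st.1 <= c /\ 0 < st.2 <= c])).
Proof.
split=> [a b X a_gt0 _ ab_coprime ab_neq1 X_gt0|].
  have A_gt0 : 0 < a%:R :> R by rewrite ltr0n.
  have AB_neq : a%:R ^+ 2 != b%:R ^+ 2 :> R by exact: natr_sqr_neq.
  by split; [exact: vol2_Rset' | exact: vol2_Rset].
exists 2; split=> //; split=> [a b X a_gt0 _ ab_coprime ab_neq1 X_gt0|u u_gt0 u_neq1].
  by apply: Rset_bounded; rewrite ?ltr0n //; exact: natr_sqr_neq.
apply: S_u_bounded; rewrite -[1](expr1n _ 2) eqrXn2 ?ler01 ?ltW //.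
Qed.
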